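(* In the transaction packaging game described in the context, let $$\hat p(\mathsf{tx})=\frac{1}{|M|}\left(k+\sum_{\mathsf{tx}'\in M}\frac{\ln v(\mathsf{tx})-\ln v(\mathsf{tx}')}{\lambda}\right)\quad(\mathsf{tx}\in M),$$ and for $x\in\mathbb{R}$ define $p_x:M\to\mathbb{R}$ by $p_x(\mathsf{tx})=0$ if $\hat p(\mathsf{tx})\le x$, $p_x(\mathsf{tx})=\hat p(\mathsf{tx})-x$ if $x<\hat p(\mathsf{tx})<x+1$, and $p_x(\mathsf{tx})=1$ if $\hat p(\mathsf{tx})\ge x+1$. Let $\hat x\in\mathbb{R}$ be the smallest solution of the equation $\sum_{\mathsf{tx}\in M}\min(\max(\hat p(\mathsf{tx})-x,0),1)=k$. Then $p_{\hat x}$ satisfies (1) $p_{\hat x}(\mathsf{tx})\in[0,1]$ for all $\mathsf{tx}\in M$, and (2) $\sum_{\mathsf{tx}\in M}p_{\hat x}(\mathsf{tx})=k$; and the corresponding strategy $\sigma$ of $p_{\hat x}$ (a mixed strategy with $p^\sigma(\mathsf{tx})=p_{\hat x}(\mathsf{tx})$ for all $\mathsf{tx}\in M$) is an equilibrium strategy.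
   Context: Transaction packaging game. Fix a positive integer $k$ (block capacity), a real $\lambda>0$ (network latency parameter), a finite set $M$ (the mempool) of transactions with $|M|\ge k$, and a gas price function $v:M\to(0,\infty)$. Miners are indexed by $i\in[0,1]$. A pure strategy of a miner is a subset $D\subseteq M$ with $|D|=k$; let $\mathcal{S}$ be the set of such subsets. A mixed strategy is a probability distribution $\sigma$ on $\mathcal{S}$, and its marginal probability is $p^\sigma(\mathsf{tx})=\sum_{D\in\mathcal{S}}\sigma(D)\mathbf{1}[\mathsf{tx}\in D]$. A corresponding strategy of a function $p:M\to[0,1]$ is a mixed strategy $\sigma$ with $p^\sigma(\mathsf{tx})=p(\mathsf{tx})$ for all $\mathsf{tx}\in M$. Conditional on miner $i$ mining a block $B_i$ (drawn from her mixed strategy $\sigma_i$), the number $\gamma$ of other blocks mined is distributed as $\mathrm{Poisson}(\lambda)$; they are mined by miners chosen independently and uniformly at random from $[0,1]$, each such miner $j$ producing a block $B_j$ drawn independently from her mixed strategy $\sigma_j$. The utility of miner $i$ is $u_i(\sigma_i,\sigma_{-i})=\sum_{\mathsf{tx}\in M}p^{\sigma_i}(\mathsf{tx})\,v(\mathsf{tx})\,\Pr[\text{no other mined block }B_j\ (j\neq i)\text{ contains }\mathsf{tx}]$. A mixed strategy $\sigma^*$ is an equilibrium strategy if for every $i\in[0,1]$ and every mixed strategy $\sigma$, $u_i(\sigma,\sigma^*_{-i})\le u_i(\sigma^*,\sigma^*_{-i})$, where $\sigma^*_{-i}$ denotes the profile in which all miners other than $i$ use $\sigma^*$. *)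

From HB Require Import structures.
From mathcomp Require Import all_boot all_order all_algebra.
From mathcomp Require Import all_classical all_reals all_analysis.
Set Implicit Arguments. Unset Strict Implicit. Unset Printing Implicit Defensive.
Import Order.TTheory GRing.Theory Num.Theory.
Import numFieldNormedType.Exports.
Local Open Scope ring_scope.

Section Game.
Variables (R : realType) (T : finType).

(* A mixed strategy: a probability distribution on the pure strategies,
   i.e. on subsets D of the mempool T with #|D| = k. *)
Definition mixed_strategy (k : nat) (s : {set T} -> R) : Prop :=
  (forall D : {set T}, 0 <= s D) /\ (forall D : {set T}, #|D| != k -> s D = 0) /\
  \sum_(D : {set T} | #|D| == k) s D = 1.

Definition marginal (k : nat) (s : {set T} -> R) (tx : T) : R :=
  \sum_(D : {set T} | #|D| == k) s D * (tx \in D)%:R.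

(* Pr[no other mined block contains tx] when every other miner plays sstar:
   gamma ~ Poisson(lam) other blocks, each (independently) produced by a
   uniformly random miner j (a.s. j <> i, so j plays sstar) and contains tx
   with probability p^sstar(tx). *)
Definition prob_none (k : nat) (lam : R) (sstar : {set T} -> R) (tx : T) : R :=
  limn (series (fun n : nat => expR (- lam) * lam ^+ n / (n`!)%:R
                 * (1 - marginal k sstar tx) ^+ n)).

Definition utility (k : nat) (lam : R) (v : T -> R)
  (s sstar : {set T} -> R) : R :=
  \sum_(tx : T) marginal k s tx * v tx * prob_none k lam sstar tx.

(* equilibrium strategy: no miner i in [0,1] gains by deviating; the
   utility of miner i against sstar_{-i} does not depend on i. *)
Definition equilibrium (k : nat) (lam : R) (v : T -> R)
  (sstar : {set T} -> R) : Prop :=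
  mixed_strategy k sstar /\
  forall i : R, 0 <= i <= 1 ->
    forall s, mixed_strategy k s ->
      utility k lam v s sstar <= utility k lam v sstar sstar.

Definition phat (k : nat) (lam : R) (v : T -> R) (tx : T) : R :=
  (#|T|%:R)^-1 * (k%:R + \sum_(tx' : T) (ln (v tx) - ln (v tx')) / lam).

Definition p_x (k : nat) (lam : R) (v : T -> R) (x : R) (tx : T) : R :=
  let ph := phat k lam v tx in
  if ph <= x then 0 else if ph < x + 1 then ph - x else 1.

Definition xeq_lhs (k : nat) (lam : R) (v : T -> R) (x : R) : R :=
  \sum_(tx : T) Num.min (Num.max (phat k lam v tx - x) 0) 1.

End Game.

(* First, by Poisson thinning a transaction
   included with marginal probability p by every other miner survives with
   probability exp(-lam p), so a deviation q earns sum_tx q(tx) w(tx) with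
   w(tx) = v(tx) exp(-lam p(tx)).  For p = p_x one has
   v(tx) = exp(K + lam phat(tx)), hence w(tx) = exp(K + lam (phat(tx) - p(tx))),
   and this weight is at most exp(K + lam x) where p(tx) < 1 and at least it
   where p(tx) > 0: p fills the k units of capacity greedily with the heaviest
   weights, so no q with values in [0,1] and the same total does better.
   Second, any p with values in [0,1] and sum k is the marginal of a
   distribution on k-subsets: if some coordinate is fractional there are two,
   a and b, and p is a convex combination of the two transfers of mass between
   a and b that make one more coordinate integral. *)
From Pilot Require Import Defs.
From mathcomp Require Import all_boot all_order all_algebra.
From mathcomp Require Import all_classical all_reals all_analysis.
From mathcomp Require Import ring lra.
Import Order.TTheory GRing.Theory Num.Theory.
Local Open Scope ring_scope.

Section Marginals.
Variables (R : realType) (T : finType) (k : nat).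
Implicit Types (s : {set T} -> R) (p q : T -> R) (a b t : T).

Lemma sum_indicator (D : {set T}) : \sum_t ((t \in D)%:R : R) = #|D|%:R.
Proof.
rewrite (eq_bigr (fun t => if t \in D then 1 else 0)); last by move=> t _; case: (t \in D).
by rewrite -big_mkcond sumr_const.
Qed.

Lemma sum_delta a : \sum_t ((t == a)%:R : R) = 1.
Proof. by rewrite (bigD1 a) //= eqxx big1 ?addr0 // => t /negbTE ->. Qed.

Lemma marginal_range s : mixed_strategy k s -> forall t, 0 <= marginal k s t <= 1.
Proof.
move=> [s_ge0 [_ s_sum]] t; apply/andP; split.
  by apply: sumr_ge0 => D _; rewrite mulr_ge0.
rewrite -s_sum; apply: ler_sum => D _.
by case: (t \in D); rewrite ?mulr1 ?mulr0.
Qed.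

Lemma sum_marginal s : mixed_strategy k s -> \sum_t marginal k s t = k%:R.
Proof.
move=> [_ [_ s_sum]]; rewrite /marginal exchange_big /=.
rewrite (eq_bigr (fun D => s D * k%:R)); last first.
  by move=> D /eqP cardD; rewrite -mulr_sumr sum_indicator cardD.
by rewrite -mulr_suml s_sum mul1r.
Qed.

Definition realizable p := exists s, mixed_strategy k s /\ forall t, marginal k s t = p t.

Lemma realizable_indicator (D : {set T}) :
  #|D| = k -> realizable (fun t => (t \in D)%:R).
Proof.
move=> cardD; exists (fun E => (E == D)%:R); split; [split; [|split]|].
- by move=> E; rewrite ler0n.
- by move=> E; case: (E =P D) => // ->; rewrite cardD eqxx.
- rewrite (bigD1 D) /=; last by rewrite cardD.
  by rewrite eqxx big1 ?addr0 // => E /andP [_ /negbTE ->].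
- move=> t; rewrite /marginal (bigD1 D) /=; last by rewrite cardD.
  by rewrite eqxx mul1r big1 ?addr0 // => E /andP [_ /negbTE ->]; rewrite mul0r.
Qed.

Lemma realizable_convex p q c : 0 <= c <= 1 -> realizable p -> realizable q ->
  realizable (fun t => c * p t + (1 - c) * q t).
Proof.
move=> /andP [c0 c1] [s1 [[s1_ge0 [s1_out s1_sum]] m1]] [s2 [[s2_ge0 [s2_out s2_sum]] m2]].
exists (fun D => c * s1 D + (1 - c) * s2 D); split; [split; [|split]|].
- by move=> D; rewrite addr_ge0 // mulr_ge0 // subr_ge0.
- by move=> D cardD; rewrite s1_out // s2_out // !mulr0 addr0.
- by rewrite big_split /= -!mulr_sumr s1_sum s2_sum !mulr1 addrC subrK.
- move=> t; rewrite -m1 -m2 /marginal !mulr_sumr -big_split.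
  by apply: eq_bigr => D _ /=; ring.
Qed.

Definition fractional p := [set t | 0 < p t < 1].

Lemma nonfractionalE p t : 0 <= p t <= 1 -> t \notin fractional p -> p t = (p t == 1)%:R.
Proof.
move=> /andP [p0 p1]; rewrite inE negb_and -!leNgt.
case: eqP => [-> //|/eqP p_neq1] /orP [pt|pt]; first by apply/eqP; rewrite eq_le pt p0.
by rewrite eq_le p1 pt in p_neq1.
Qed.

Lemma fractional_pair {p a} : (forall t, 0 <= p t <= 1) -> \sum_t p t = k%:R ->
  a \in fractional p -> exists2 b, b \in fractional p & b != a.
Proof.
move=> p_range p_sum a_frac.
have [b /andP [b_frac ba]|only_a] := pickP (fun t => (t \in fractional p) && (t != a)).
  by exists b.
pose D := [set t | p t == 1].
have pE t : p t = p a * (t == a)%:R + (t \in D)%:R.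
  move: a_frac; rewrite inE => /andP [_ pa_lt1].
  case: (t =P a) => [->|/eqP ta]; first by rewrite inE lt_eqF //= mulr1 addr0.
  have /negbT t_nfrac := only_a t; rewrite ta andbT in t_nfrac.
  by rewrite mulr0 add0r inE -nonfractionalE.
have k_eq : k%:R = p a + #|D|%:R :> R.
  rewrite -p_sum (eq_bigr _ (fun t _ => pE t)) big_split /=.
  by rewrite -mulr_sumr sum_delta mulr1 sum_indicator.
move: a_frac; rewrite inE => /andP [pa_gt0 pa_lt1].
have [kD|Dk] := leqP k #|D|.
  by move: kD; rewrite -(ler_nat R); lra.
have : #|D|%:R + 1 <= k%:R :> R by rewrite natr1 ler_nat.
by lra.
Qed.

Definition transfer p a b g t := p t + g * ((t == a)%:R - (t == b)%:R).

Lemma sum_transfer p a b g : \sum_t transfer p a b g t = \sum_t p t.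
Proof. by rewrite big_split /= -mulr_sumr sumrB !sum_delta subrr mulr0 addr0. Qed.

(* The largest step keeping both coordinates in [0, 1]; it makes one of them integral. *)
Lemma transfer_min {p a b} : (forall t, 0 <= p t <= 1) ->
  a \in fractional p -> b \in fractional p -> a != b ->
  let g := Num.min (1 - p a) (p b) in
  [/\ 0 < g, forall t, 0 <= transfer p a b g t <= 1
    & fractional (transfer p a b g) \proper fractional p].
Proof.
move=> p_range; rewrite !inE => /andP [pa0 pa1] /andP [pb0 pb1] ab g.
have g_gt0 : 0 < g by rewrite lt_min subr_gt0 pa1 pb0.
have ga : g <= 1 - p a by rewrite ge_min lexx.
have gb : g <= p b by rewrite ge_min lexx orbT.
have g_eq : g = 1 - p a \/ g = p b.
  have [le_ab|lt_ba] := leP (1 - p a) (p b); [left | right].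
    exact: min_l.
  exact/min_r/ltW.
have qa : transfer p a b g a = p a + g.
  by rewrite /transfer eqxx (negbTE ab) subr0 mulr1.
have qb : transfer p a b g b = p b - g.
  by rewrite /transfer eqxx eq_sym (negbTE ab) sub0r mulrN1.
have qt t : t != a -> t != b -> transfer p a b g t = p t.
  by move=> /negbTE ta /negbTE tb; rewrite /transfer ta tb subr0 mulr0 addr0.
split => //.
- move=> t; case: (t =P a) => [->|/eqP ta]; first by rewrite qa; apply/andP; lra.
  case: (t =P b) => [->|/eqP tb]; first by rewrite qb; apply/andP; lra.
  by rewrite qt.
- apply/properP; split.
    apply/fintype.subsetP => t.
    case: (t =P a) => [-> _|/eqP ta]; first by rewrite inE pa0 pa1.
    case: (t =P b) => [-> _|/eqP tb]; first by rewrite inE pb0 pb1.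
    by rewrite !inE qt.
  case: g_eq => e; [exists a | exists b]; rewrite !inE ?pa0 ?pa1 ?pb0 ?pb1 //.
    by rewrite qa e negb_and -leNgt; apply/orP; right; lra.
  by rewrite qb e subrr ltxx.
Qed.

Lemma transfer_convex p a b g h t : 0 < g -> 0 < h ->
  h / (g + h) * transfer p a b g t + (1 - h / (g + h)) * transfer p b a h t = p t.
Proof. by move=> g0 h0; rewrite /transfer; field; rewrite gt_eqF ?addr_gt0. Qed.

Lemma realizable_marginals p : (forall t, 0 <= p t <= 1) -> \sum_t p t = k%:R ->
  realizable p.
Proof.
have [n] := ubnP #|fractional p|; elim: n p => // n IHn p frac_lt p_range p_sum.
have [a a_frac|no_frac] := pickP (mem (fractional p)); last first.
  pose D := [set t | p t == 1].
  have pE : p = fun t => (t \in D)%:R.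
    by apply/funext => t; rewrite inE -nonfractionalE // [_ \in _]no_frac.
  have cardD : #|D| = k.
    by apply/eqP; rewrite -(eqr_nat R) -sum_indicator -p_sum pE.
  by rewrite pE; apply: realizable_indicator.
have [b b_frac ba] := fractional_pair p_range p_sum a_frac.
have ab : a != b by rewrite eq_sym.
set g := Num.min (1 - p a) (p b); set h := Num.min (1 - p b) (p a).
have [g_gt0 q1_range q1_frac] := transfer_min p_range a_frac b_frac ab.
have [h_gt0 q2_range q2_frac] := transfer_min p_range b_frac a_frac ba.
have q_realizable q : (forall t, 0 <= q t <= 1) -> \sum_t q t = \sum_t p t ->
    fractional q \proper fractional p -> realizable q.
  move=> q_range q_sum q_frac; apply: IHn => //; last by rewrite q_sum.
  by rewrite -ltnS; apply: leq_trans (proper_card q_frac) _.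
have -> : p = fun t =>
    h / (g + h) * transfer p a b g t + (1 - h / (g + h)) * transfer p b a h t.
  by apply/funext => t; rewrite transfer_convex.
apply: realizable_convex; last 2 first.
- by apply: q_realizable; rewrite ?sum_transfer.
- by apply: q_realizable; rewrite ?sum_transfer.
have gh_gt0 : 0 < g + h by rewrite addr_gt0.
apply/andP; split; first by rewrite divr_ge0 ?ltW.
by rewrite ler_pdivrMr // mul1r lerDr ltW.
Qed.

End Marginals.

Lemma prob_noneE (R : realType) (T : finType) k (lam : R) (s : {set T} -> R) tx :
  prob_none k lam s tx = expR (- (lam * marginal k s tx)).
Proof.
rewrite /prob_none; set m := marginal k s tx.
have -> : series (fun n => expR (- lam) * lam ^+ n / n`!%:R * (1 - m) ^+ n)
    = (fun n => expR (- lam) * series (exp_coeff (lam * (1 - m))) n).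
  apply/funext => n; rewrite /series /= mulr_sumr; apply: eq_bigr => i _.
  by rewrite /exp_coeff /= exprMn; ring.
apply: (@cvg_lim R^o); first exact: Rhausdorff.
have -> : expR (- (lam * m)) = expR (- lam) * expR (lam * (1 - m)).
  by rewrite -expRD; congr expR; ring.
by apply: cvgMl_tmp; exact: is_cvg_series_exp_coeff.
Qed.

Lemma utilityE (R : realType) (T : finType) k (lam : R) v (s s' : {set T} -> R) :
  utility k lam v s' s
  = \sum_tx marginal k s' tx * (v tx * expR (- (lam * marginal k s tx))).
Proof. by apply: eq_bigr => tx _; rewrite prob_noneE mulrA. Qed.

(* Each term (p - q) (w - c) is nonnegative, and the terms c (p - q) sum to zero. *)
Lemma threshold_sum_le (R : realDomainType) (T : finType) (p q w : T -> R) c :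
  (forall t, 0 <= q t <= 1) -> \sum_t q t = \sum_t p t ->
  (forall t, p t < 1 -> w t <= c) -> (forall t, 0 < p t -> c <= w t) ->
  \sum_t q t * w t <= \sum_t p t * w t.
Proof.
move=> q_range q_sum below above.
have term_ge0 t : 0 <= (p t - q t) * (w t - c).
  have /andP [q0 q1] := q_range t.
  case: (ltgtP (w t) c) => [wc|cw|->]; last by rewrite subrr mulr0.
  - have : ~~ (0 < p t) by apply: contraTN wc => /above; rewrite -leNgt.
    rewrite -leNgt => p0.
    by apply: mulr_le0; rewrite subr_le0; [apply: le_trans q0 | apply: ltW].
  - have : ~~ (p t < 1) by apply: contraTN cw => /below; rewrite -leNgt.
    rewrite -leNgt => p1.
    by apply: mulr_ge0; rewrite subr_ge0; [apply: le_trans p1 | apply: ltW].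
rewrite -subr_ge0 -sumrB.
have -> : \sum_t (p t * w t - q t * w t)
    = \sum_t (p t - q t) * (w t - c) + c * (\sum_t p t - \sum_t q t).
  by rewrite -sumrB mulr_sumr -big_split; apply: eq_bigr => t _ /=; ring.
by rewrite q_sum subrr mulr0 addr0 sumr_ge0.
Qed.

Section WaterFilling.
Variables (R : realType) (T : finType) (k : nat) (lam : R) (v : T -> R).
Implicit Types (x : R) (t u : T).

Local Notation phat := (phat k lam v).
Local Notation p_x := (p_x k lam v).

Lemma phat_sub t u : lam != 0 -> phat t - phat u = (ln (v t) - ln (v u)) / lam.
Proof.
move=> lam_neq0.
have card_neq0 : #|T|%:R != 0 :> R by rewrite pnatr_eq0 -lt0n; apply/card_gt0P; exists t.
rewrite /Defs.phat -mulrBr opprD addrACA subrr add0r -sumrB.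
rewrite (eq_bigr (fun _ => (ln (v t) - ln (v u)) / lam)); last first.
  by move=> t' _; field.
by rewrite sumr_const -[_ / lam *+ _]mulr_natr; field; apply/andP.
Qed.

Lemma v_expR_phat : lam != 0 -> (forall t, 0 < v t) ->
  exists K, forall t, v t = expR (K + lam * phat t).
Proof.
move=> lam_neq0 v_gt0.
have [u _|T0] := pickP (fun _ : T => true); last by exists 0 => t; have := T0 t.
exists (ln (v u) - lam * phat u) => t.
have -> : ln (v u) - lam * phat u + lam * phat t = ln (v u) + lam * (phat t - phat u).
  by ring.
by rewrite phat_sub // mulrCA mulfV // mulr1 addrC subrK lnK // posrE.
Qed.

Lemma p_xE x t : p_x x t = Num.min (Num.max (phat t - x) 0) 1.
Proof.
rewrite /Defs.p_x; case: ifPn => [le_x|]; first by rewrite max_r ?min_l //; lra.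
rewrite -ltNge => lt_x; case: ifPn => [lt_x1|]; first by rewrite max_l ?min_l //; lra.
by rewrite -leNgt => le_x1; rewrite max_l ?min_r //; lra.
Qed.

Lemma p_x_range x t : 0 <= p_x x t <= 1.
Proof. by rewrite p_xE le_min ge_min le_max !lexx ler01 !orbT. Qed.

Lemma p_x_lt1 x t : p_x x t < 1 -> phat t - p_x x t <= x.
Proof.
rewrite /Defs.p_x; case: ifPn => [le_x _|]; first lra.
rewrite -ltNge => lt_x; case: ifPn => [lt_x1 _|_]; first lra.
by rewrite ltxx.
Qed.

Lemma p_x_gt0 x t : 0 < p_x x t -> x <= phat t - p_x x t.
Proof.
rewrite /Defs.p_x; case: ifPn => [_|]; first by rewrite ltxx.
rewrite -ltNge => lt_x; case: ifPn => [_ _|]; first lra.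
by rewrite -leNgt => le_x1 _; lra.
Qed.

Lemma equilibrium_p_x x s : 0 < lam -> (forall t, 0 < v t) -> mixed_strategy k s ->
  (forall t, marginal k s t = p_x x t) -> equilibrium k lam v s.
Proof.
move=> lam_gt0 v_gt0 s_mixed s_marg; split => // _ _ s' s'_mixed.
have [K vE] := v_expR_phat (lt0r_neq0 lam_gt0) v_gt0.
rewrite !utilityE; apply: (@threshold_sum_le _ _ _ _ _ (expR (K + lam * x))).
- exact: marginal_range.
- by rewrite !sum_marginal.
- move=> t; rewrite vE -expRD ler_expR s_marg => /p_x_lt1; nra.
- move=> t; rewrite vE -expRD ler_expR s_marg => /p_x_gt0; nra.
Qed.

End WaterFilling.

Theorem theorem3p2 (R : realType) (T : finType) (k : nat) (lam : R)
  (v : T -> R) (xhat : R) :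
  (0 < k)%N -> 0 < lam -> (k <= #|T|)%N -> (forall tx, 0 < v tx) ->
  xeq_lhs k lam v xhat = k%:R ->
  (forall y : R, xeq_lhs k lam v y = k%:R -> xhat <= y) ->
  (forall tx, 0 <= p_x k lam v xhat tx <= 1) /\
  \sum_(tx : T) p_x k lam v xhat tx = k%:R /\
  (exists s : {set T} -> R, mixed_strategy k s /\
      forall tx, marginal k s tx = p_x k lam v xhat tx) /\
  (forall s : {set T} -> R, mixed_strategy k s ->
      (forall tx, marginal k s tx = p_x k lam v xhat tx) ->
      equilibrium k lam v s).
Proof.
move=> _ lam_gt0 _ v_gt0 xhat_sol _.
have p_sum : \sum_tx p_x k lam v xhat tx = k%:R.
  by rewrite -xhat_sol; apply: eq_bigr => tx _; rewrite p_xE.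
split; first exact: p_x_range.
split; first exact: p_sum.
split; first exact: realizable_marginals (p_x_range _ _ _ _ _ xhat) p_sum.
by move=> s s_mixed; apply: equilibrium_p_x.
Qed.
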